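(* Let $\mathbb{H}$ be a real Hilbert space, $\epsilon\in[0,1)$, $T\in\mathbb{K}(\mathbb{H})$ and $A\in\mathbb{B}(\mathbb{H})$ with $M_T\subseteq M_A$. Then $T\perp_B^{\epsilon}A$ if and only if there exists $x\in M_T$ such that $Tx\perp^{\epsilon}Ax$.
   Context: $\mathbb{K}(\mathbb{H})$ and $\mathbb{B}(\mathbb{H})$ denote the compact and the bounded linear operators on $\mathbb{H}$, with the operator norm. $M_T=\{x\in\mathbb{H}:\|x\|=1,\ \|Tx\|=\|T\|\}$. For $\epsilon\in[0,1)$ and $u,v$ in a normed space, $u\perp_B^{\epsilon}v$ means $\|u+\lambda v\|^2\ge\|u\|^2-2\epsilon\|u\|\|\lambda v\|$ for all $\lambda\in\mathbb{R}$. In an inner product space, $x\perp^{\epsilon}y$ means $|\langle x,y\rangle|\le\epsilon\|x\|\|y\|$. *)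

From Stdlib Require Import Reals Lra ClassicalEpsilon.
Open Scope R_scope.

Record RealInnerProductSpace := {
  carrier :> Type;
  vzero : carrier;
  vadd : carrier -> carrier -> carrier;
  vopp : carrier -> carrier;
  vscal : R -> carrier -> carrier;
  inner : carrier -> carrier -> R;
  vadd_assoc : forall x y z, vadd x (vadd y z) = vadd (vadd x y) z;
  vadd_comm : forall x y, vadd x y = vadd y x;
  vadd_0 : forall x, vadd x vzero = x;
  vadd_opp : forall x, vadd x (vopp x) = vzero;
  vscal_1 : forall x, vscal 1 x = x;
  vscal_assoc : forall a b x, vscal a (vscal b x) = vscal (a * b) x;
  vscal_distr_v : forall a x y, vscal a (vadd x y) = vadd (vscal a x) (vscal a y);
  vscal_distr_s : forall a b x, vscal (a + b) x = vadd (vscal a x) (vscal b x);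
  inner_sym : forall x y, inner x y = inner y x;
  inner_add_l : forall x y z, inner (vadd x y) z = inner x z + inner y z;
  inner_scal_l : forall a x y, inner (vscal a x) y = a * inner x y;
  inner_pos : forall x, 0 <= inner x x;
  inner_def : forall x, inner x x = 0 -> x = vzero
}.

Arguments vzero {_}. Arguments vadd {_}. Arguments vopp {_}. Arguments vscal {_}. Arguments inner {_}.
Definition vnorm {V : RealInnerProductSpace} (x : V) : R := sqrt (inner x x).
Definition vsub {V : RealInnerProductSpace} (x y : V) : V := vadd x (vopp y).

Definition seq_converges {V : RealInnerProductSpace} (u : nat -> V) (l : V) : Prop :=
  forall eps, 0 < eps -> exists N, forall n, (N <= n)%nat -> vnorm (vsub (u n) l) < eps.

Definition seq_cauchy {V : RealInnerProductSpace} (u : nat -> V) : Prop :=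
  forall eps, 0 < eps -> exists N, forall n m, (N <= n)%nat -> (N <= m)%nat ->
    vnorm (vsub (u n) (u m)) < eps.

Definition is_complete (V : RealInnerProductSpace) : Prop :=
  forall u : nat -> V, seq_cauchy u -> exists l, seq_converges u l.

Definition is_linear {V : RealInnerProductSpace} (T : V -> V) : Prop :=
  (forall x y, T (vadd x y) = vadd (T x) (T y)) /\
  (forall a x, T (vscal a x) = vscal a (T x)).

Definition is_bounded_op {V : RealInnerProductSpace} (T : V -> V) : Prop :=
  is_linear T /\ exists c, forall x, vnorm (T x) <= c * vnorm x.

Definition is_compact_op {V : RealInnerProductSpace} (T : V -> V) : Prop :=
  is_bounded_op T /\
  forall u : nat -> V, (exists M, forall n, vnorm (u n) <= M) ->
    exists (phi : nat -> nat) (l : V),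
      (forall n, (phi n < phi (S n))%nat) /\ seq_converges (fun n => T (u (phi n))) l.

Definition opnorm {V : RealInnerProductSpace} (T : V -> V) : R :=
  epsilon (inhabits 0)
    (fun c => is_lub (fun r => exists x : V, vnorm x <= 1 /\ r = vnorm (T x)) c).

Definition norm_attaining_set {V : RealInnerProductSpace} (T : V -> V) (x : V) : Prop :=
  vnorm x = 1 /\ vnorm (T x) = opnorm T.

Definition op_add_scal {V : RealInnerProductSpace} (T A : V -> V) (l : R) : V -> V :=
  fun x => vadd (T x) (vscal l (A x)).

Definition BJ_eps_orth_op {V : RealInnerProductSpace} (eps : R) (T A : V -> V) : Prop :=
  forall l : R,
    (opnorm (op_add_scal T A l)) ^ 2 >=
      (opnorm T) ^ 2 - 2 * eps * opnorm T * opnorm (fun x => vscal l (A x)).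

Definition ip_eps_orth {V : RealInnerProductSpace} (eps : R) (x y : V) : Prop :=
  Rabs (inner x y) <= eps * vnorm x * vnorm y.

From Stdlib Require Import Reals Lra Lia ClassicalEpsilon Classical.
Open Scope R_scope.

(* The converse implication is a direct expansion of [|(T + l A) x|^2] at a vector [x] of
   [M_T], which lies in [M_A].  For the direct one, let [s = ±1], [t > 0] be small and let [x]
   almost maximize [|(T - s t A) x|]: the inequality [T ⊥_B^eps A] at [l = - s t] forces [x] to
   almost maximize [|T x|], with [s <T x, A x> <= c + O(t)] where [c = eps |T| |A|].  Letting
   [t -> 0], compactness of [T] yields [x], [y] in [M_T] with [<T x, A x> <= c] and
   [- c <= <T y, A y>].  The vectors [z] with [|T z| = |T| |z|] form a subspace, so along the
   segment from [x] to [y] the intermediate value theorem applied to [<T z, A z> + c |z|^2]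
   produces, after normalization, [w] in [M_T] (hence in [M_A]) with [<T w, A w> = - c
   = - eps |T w| |A w|]. *)

Lemma Rabs_le_between a b : Rabs a <= b -> - b <= a <= b.
Proof. unfold Rabs. destruct (Rcase_abs a); lra. Qed.

Lemma Rle_of_sqr_le a b : 0 <= b -> a ^ 2 <= b ^ 2 -> a <= b.
Proof. intros Hb H. destruct (Rle_lt_dec a b); auto. nra. Qed.

Lemma Rlt_of_sqr_lt a b : 0 <= b -> a ^ 2 < b ^ 2 -> a < b.
Proof. intros Hb H. destruct (Rlt_le_dec a b); auto. nra. Qed.

Section InnerProductSpace.
Context {V : RealInnerProductSpace}.
Implicit Types x y z u v w : V.

Lemma vadd_cancel u v : vadd u v = u -> v = vzero.
Proof.
  intro H.
  assert (E : v = vadd v (vadd u (vopp u))) by (rewrite vadd_opp, vadd_0; auto).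
  rewrite E, (vadd_assoc V), (vadd_comm V v u), H. apply vadd_opp.
Qed.

Lemma vopp_unique u v : vadd u v = vzero -> v = vopp u.
Proof.
  intro H.
  assert (E : v = vadd v (vadd u (vopp u))) by (rewrite vadd_opp, vadd_0; auto).
  rewrite E, (vadd_assoc V), (vadd_comm V v u), H, vadd_comm. apply vadd_0.
Qed.

Lemma vopp_vopp u : vopp (vopp u) = u.
Proof. symmetry. apply vopp_unique. rewrite vadd_comm. apply vadd_opp. Qed.

Lemma inner_add_r x y z : inner x (vadd y z) = inner x y + inner x z.
Proof. rewrite inner_sym, inner_add_l, (inner_sym V y), (inner_sym V z). reflexivity. Qed.

Lemma inner_scal_r a x y : inner x (vscal a y) = a * inner x y.
Proof. rewrite inner_sym, inner_scal_l, inner_sym. reflexivity. Qed.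

Lemma inner_zero_l y : inner vzero y = 0.
Proof. assert (H := inner_add_l V vzero vzero y). rewrite vadd_0 in H. lra. Qed.

Lemma inner_zero_r y : inner y vzero = 0.
Proof. rewrite inner_sym. apply inner_zero_l. Qed.

Lemma inner_opp_l x y : inner (vopp x) y = - inner x y.
Proof.
  assert (H := inner_add_l V x (vopp x) y). rewrite vadd_opp, inner_zero_l in H. lra.
Qed.

Lemma inner_opp_r x y : inner x (vopp y) = - inner x y.
Proof. rewrite inner_sym, inner_opp_l, inner_sym. reflexivity. Qed.

Lemma inner_sub_l x y z : inner (vsub x y) z = inner x z - inner y z.
Proof. unfold vsub. rewrite inner_add_l, inner_opp_l. ring. Qed.

Lemma inner_sub_r x y z : inner z (vsub x y) = inner z x - inner z y.
Proof. unfold vsub. rewrite inner_add_r, inner_opp_r. ring. Qed.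

Lemma inner_ext u v : (forall w, inner u w = inner v w) -> u = v.
Proof.
  intro H. assert (E : vsub u v = vzero) by (apply inner_def; rewrite inner_sub_l, !H; ring).
  apply vopp_unique in E. rewrite <- (vopp_vopp u), <- E, vopp_vopp. reflexivity.
Qed.

End InnerProductSpace.

Ltac inner_expand :=
  repeat first [rewrite inner_add_l | rewrite inner_scal_l | rewrite inner_opp_l
  | rewrite inner_sub_l | rewrite inner_add_r | rewrite inner_scal_r | rewrite inner_opp_r
  | rewrite inner_sub_r | rewrite inner_zero_l | rewrite inner_zero_r].

Section Norm.
Context {V : RealInnerProductSpace}.
Implicit Types x y z u v w : V.

Lemma vnorm_ge0 x : 0 <= vnorm x.
Proof. apply sqrt_pos. Qed.

Lemma vnorm_sq x : vnorm x ^ 2 = inner x x.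
Proof. unfold vnorm. simpl. rewrite Rmult_1_r. apply sqrt_sqrt, inner_pos. Qed.

Lemma vnorm_zero : vnorm (@vzero V) = 0.
Proof. unfold vnorm. rewrite inner_zero_l. apply sqrt_0. Qed.

Lemma vnorm_eq0 x : vnorm x = 0 -> x = vzero.
Proof. intro H. apply inner_def. rewrite <- vnorm_sq, H. ring. Qed.

Lemma vnorm_gt0 x : x <> vzero -> 0 < vnorm x.
Proof.
  intro Hx. destruct (vnorm_ge0 x) as [|E]; auto.
  exfalso. apply Hx, vnorm_eq0. auto.
Qed.

Lemma vnorm_scal a x : vnorm (vscal a x) = Rabs a * vnorm x.
Proof.
  unfold vnorm. rewrite inner_scal_l, inner_scal_r, <- Rmult_assoc, sqrt_mult_alt by nra.
  f_equal. exact (sqrt_Rsqr_abs a).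
Qed.

Lemma vnorm_normalize x : x <> vzero -> vnorm (vscal (/ vnorm x) x) = 1.
Proof.
  intro Hx. assert (Hn := vnorm_gt0 x Hx).
  rewrite vnorm_scal, Rabs_right by (left; apply Rinv_0_lt_compat; lra). field. lra.
Qed.

Lemma cauchy_schwarz x y : Rabs (inner x y) <= vnorm x * vnorm y.
Proof.
  apply Rle_of_sqr_le; [apply Rmult_le_pos; apply vnorm_ge0|].
  rewrite Rpow_mult_distr, !vnorm_sq, pow2_abs.
  destruct (Req_dec (inner y y) 0) as [E|E].
  - apply inner_def in E. subst y. rewrite !inner_zero_r. generalize (inner_pos V x). nra.
  - (* nonnegativity of |x + t y|^2 at the minimizing t *)
    set (t := - inner x y / inner y y).
    assert (Hq := inner_pos V (vadd x (vscal t y))).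
    rewrite inner_add_l, !inner_add_r, !inner_scal_l, !inner_scal_r, (inner_sym V y x) in Hq.
    assert (Hy : 0 < inner y y) by (generalize (inner_pos V y); lra).
    replace (inner x x + t * inner x y + (t * inner x y + t * (t * inner y y)))
      with ((inner x x * inner y y - inner x y ^ 2) / inner y y) in Hq by (unfold t; field; lra).
    apply Rmult_le_compat_r with (r := inner y y) in Hq; [|lra].
    unfold Rdiv in Hq. rewrite Rmult_assoc, Rinv_l, Rmult_1_r, Rmult_0_l in Hq by lra. lra.
Qed.

Lemma vnorm_triangle x y : vnorm (vadd x y) <= vnorm x + vnorm y.
Proof.
  apply Rle_of_sqr_le; [generalize (vnorm_ge0 x) (vnorm_ge0 y); lra|].
  rewrite vnorm_sq, inner_add_l, !inner_add_r, (inner_sym V y x).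
  assert (H := Rabs_le_between _ _ (cauchy_schwarz x y)).
  rewrite <- (vnorm_sq x), <- (vnorm_sq y). nra.
Qed.

Lemma vnorm_sub_sym x y : vnorm (vsub x y) = vnorm (vsub y x).
Proof. unfold vnorm. f_equal. rewrite !inner_sub_l, !inner_sub_r, (inner_sym V x y). ring. Qed.

Lemma vnorm_sub_triangle x y z : vnorm (vsub x z) <= vnorm (vsub x y) + vnorm (vsub y z).
Proof.
  replace (vsub x z) with (vadd (vsub x y) (vsub y z)); [apply vnorm_triangle|].
  apply inner_ext. intro w. inner_expand. ring.
Qed.

Lemma vnorm_sub_ge x y : vnorm x - vnorm y <= vnorm (vsub x y).
Proof.
  assert (H := vnorm_sub_triangle x y vzero).
  replace (vsub x vzero) with x in H by (apply inner_ext; intro w; inner_expand; ring).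
  replace (vsub y vzero) with y in H by (apply inner_ext; intro w; inner_expand; ring).
  lra.
Qed.

Lemma parallelogram x y :
  vnorm (vsub x y) ^ 2 + vnorm (vadd x y) ^ 2 = 2 * vnorm x ^ 2 + 2 * vnorm y ^ 2.
Proof. rewrite !vnorm_sq. inner_expand. rewrite (inner_sym V y x). ring. Qed.

End Norm.

Section Operators.
Context {V : RealInnerProductSpace}.
Implicit Types x y z u v w : V.
Implicit Types S T A : V -> V.

Lemma lin_zero T : is_linear T -> T vzero = vzero.
Proof. intros [Ha _]. apply (vadd_cancel (T vzero)). rewrite <- Ha, vadd_0. reflexivity. Qed.

Lemma lin_opp T x : is_linear T -> T (vopp x) = vopp (T x).
Proof.
  intros HT. apply vopp_unique. rewrite <- (proj1 HT), vadd_opp. apply lin_zero, HT.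
Qed.

Lemma lin_sub T x y : is_linear T -> T (vsub x y) = vsub (T x) (T y).
Proof. intros HT. unfold vsub. rewrite (proj1 HT), lin_opp; auto. Qed.

Lemma lin_comb T a b x y : is_linear T ->
  T (vadd (vscal a x) (vscal b y)) = vadd (vscal a (T x)) (vscal b (T y)).
Proof. intros [Ha Hs]. rewrite Ha, !Hs. reflexivity. Qed.

Lemma opnorm_lub S : is_bounded_op S ->
  is_lub (fun r => exists x, vnorm x <= 1 /\ r = vnorm (S x)) (opnorm S).
Proof.
  intros [_ [c Hc]]. unfold opnorm. apply epsilon_spec.
  destruct (completeness (fun r => exists x, vnorm x <= 1 /\ r = vnorm (S x))) as [m Hm].
  - exists (Rabs c). intros r [x [Hx ->]]. specialize (Hc x).
    generalize (vnorm_ge0 x) (Rle_abs c) (Rabs_pos c). nra.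
  - exists (vnorm (S vzero)), vzero. rewrite vnorm_zero. split; [lra|auto].
  - exists m; exact Hm.
Qed.

Lemma opnorm_ub S x : is_bounded_op S -> vnorm x <= 1 -> vnorm (S x) <= opnorm S.
Proof. intros HS Hx. apply (proj1 (opnorm_lub S HS)). exists x; auto. Qed.

Lemma opnorm_least S c : is_bounded_op S ->
  (forall x, vnorm x <= 1 -> vnorm (S x) <= c) -> opnorm S <= c.
Proof. intros HS H. apply (proj2 (opnorm_lub S HS)). intros r [x [Hx ->]]. auto. Qed.

Lemma opnorm_ge0 S : is_bounded_op S -> 0 <= opnorm S.
Proof.
  intros HS. apply Rle_trans with (vnorm (S vzero)); [apply vnorm_ge0|].
  apply opnorm_ub; auto. rewrite vnorm_zero; lra.
Qed.

Lemma opnorm_approx S d : is_bounded_op S -> 0 < d ->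
  exists x, vnorm x <= 1 /\ opnorm S - d < vnorm (S x).
Proof.
  intros HS Hd. apply NNPP. intro N.
  enough (opnorm S <= opnorm S - d) by lra.
  apply opnorm_least; auto. intros x Hx.
  apply Rnot_lt_le. intro Hlt. apply N. exists x. auto.
Qed.

Lemma vnorm_op_le S x : is_bounded_op S -> vnorm (S x) <= opnorm S * vnorm x.
Proof.
  intros HS. destruct (Req_dec (vnorm x) 0) as [E|E].
  - apply vnorm_eq0 in E. subst x. rewrite (lin_zero S (proj1 HS)), vnorm_zero. lra.
  - assert (Hx : x <> vzero) by (intro Ex; apply E; rewrite Ex; apply vnorm_zero).
    assert (H := opnorm_ub S _ HS (Req_le _ _ (vnorm_normalize x Hx))).
    rewrite (proj2 (proj1 HS)), vnorm_scal, Rabs_right in H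
      by (left; apply Rinv_0_lt_compat, vnorm_gt0, Hx).
    assert (Hn := vnorm_gt0 x Hx).
    apply Rmult_le_compat_r with (r := vnorm x) in H; [|lra].
    rewrite Rmult_comm, <- Rmult_assoc, Rinv_r, Rmult_1_l in H; lra.
Qed.

Lemma sqnorm_op_le S x : is_bounded_op S -> vnorm (S x) ^ 2 <= opnorm S ^ 2 * vnorm x ^ 2.
Proof.
  intros HS. assert (H := vnorm_op_le S x HS).
  assert (0 <= vnorm (S x)) by apply vnorm_ge0.
  rewrite <- Rpow_mult_distr. apply pow_incr. lra.
Qed.

Lemma bounded_op_scal A l : is_bounded_op A -> is_bounded_op (fun x => vscal l (A x)).
Proof.
  intros [[Aa As] [d Hd]]. split; [split|].
  - intros x y. apply inner_ext. intro w. rewrite Aa. inner_expand. ring.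
  - intros a x. apply inner_ext. intro w. rewrite As. inner_expand. ring.
  - exists (Rabs l * Rabs d). intro x. rewrite vnorm_scal, Rmult_assoc.
    apply Rmult_le_compat_l; [apply Rabs_pos|].
    apply Rle_trans with (d * vnorm x); auto.
    apply Rmult_le_compat_r; [apply vnorm_ge0|apply Rle_abs].
Qed.

Lemma bounded_op_add_scal T A l : is_bounded_op T -> is_bounded_op A ->
  is_bounded_op (op_add_scal T A l).
Proof.
  intros [[Ta Ts] [c Hc]] HA.
  destruct (bounded_op_scal A l HA) as [[Aa As] [d Hd]].
  unfold op_add_scal. split; [split|].
  - intros x y. apply inner_ext. intro w. rewrite Ta, Aa. inner_expand. ring.
  - intros a x. apply inner_ext. intro w. rewrite Ts, As. inner_expand. ring.
  - exists (c + d). intro x. eapply Rle_trans; [apply vnorm_triangle|].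
    specialize (Hc x). specialize (Hd x). lra.
Qed.

Lemma opnorm_scal_le A l : is_bounded_op A ->
  opnorm (fun x => vscal l (A x)) <= Rabs l * opnorm A.
Proof.
  intros HA. apply opnorm_least; [apply bounded_op_scal; auto|].
  intros x Hx. rewrite vnorm_scal. apply Rmult_le_compat_l; [apply Rabs_pos|].
  apply opnorm_ub; auto.
Qed.

Lemma opnorm_scal_ge A l x : is_bounded_op A -> vnorm x <= 1 ->
  Rabs l * vnorm (A x) <= opnorm (fun x => vscal l (A x)).
Proof.
  intros HA Hx. rewrite <- vnorm_scal.
  apply (opnorm_ub (fun x => vscal l (A x))); auto. apply bounded_op_scal; auto.
Qed.

Lemma sqnorm_op_add_scal T A l x :
  vnorm (op_add_scal T A l x) ^ 2
  = vnorm (T x) ^ 2 + 2 * l * inner (T x) (A x) + l ^ 2 * vnorm (A x) ^ 2.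
Proof. rewrite !vnorm_sq. unfold op_add_scal. inner_expand. rewrite (inner_sym V (A x)). ring. Qed.

Lemma inner_op_lipschitz T A x v :
  is_bounded_op T -> is_bounded_op A -> vnorm x <= 1 -> vnorm v <= 1 ->
  Rabs (inner (T x) (A x) - inner (T v) (A v))
  <= 2 * opnorm T * opnorm A * vnorm (vsub x v).
Proof.
  intros HT HA Hx Hv.
  replace (inner (T x) (A x) - inner (T v) (A v))
    with (inner (T (vsub x v)) (A x) + inner (T v) (A (vsub x v)))
    by (rewrite (lin_sub T _ _ (proj1 HT)), (lin_sub A _ _ (proj1 HA)); inner_expand; ring).
  eapply Rle_trans; [apply Rabs_triang|].
  assert (C1 := cauchy_schwarz (T (vsub x v)) (A x)).
  assert (C2 := cauchy_schwarz (T v) (A (vsub x v))).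
  assert (B1 := vnorm_op_le T (vsub x v) HT). assert (B2 := vnorm_op_le A x HA).
  assert (B3 := vnorm_op_le T v HT). assert (B4 := vnorm_op_le A (vsub x v) HA).
  assert (K0 := opnorm_ge0 T HT). assert (a0 := opnorm_ge0 A HA).
  generalize (vnorm_ge0 (vsub x v)) (vnorm_ge0 x) (vnorm_ge0 v)
    (vnorm_ge0 (T (vsub x v))) (vnorm_ge0 (A x)) (vnorm_ge0 (T v)) (vnorm_ge0 (A (vsub x v))).
  intros. set (d := vnorm (vsub x v)) in *. set (K := opnorm T) in *. set (a := opnorm A) in *.
  assert (vnorm (T (vsub x v)) * vnorm (A x) <= (K * d) * (a * 1))
    by (apply Rmult_le_compat; nra).
  assert (vnorm (T v) * vnorm (A (vsub x v)) <= (K * 1) * (a * d))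
    by (apply Rmult_le_compat; nra).
  lra.
Qed.

End Operators.

Definition limsup_le0 (r : nat -> R) : Prop :=
  forall d, 0 < d -> exists N, forall n, (N <= n)%nat -> r n < d.

Lemma limsup_le0_le (r r' : nat -> R) :
  (forall n, r n <= r' n) -> limsup_le0 r' -> limsup_le0 r.
Proof.
  intros Hle H d Hd. destruct (H d Hd) as [N HN].
  exists N. intros n Hn. specialize (HN n Hn). specialize (Hle n). lra.
Qed.

Lemma limsup_le0_inv_subseq (phi : nat -> nat) (c : R) :
  (forall n, (phi n < phi (S n))%nat) -> limsup_le0 (fun n => c / INR (S (phi n))).
Proof.
  intros Hphi d Hd.
  assert (Hge : forall n, (n <= phi n)%nat)
    by (induction n; [lia|]; specialize (Hphi n); lia).
  destruct (INR_archimed d c Hd) as [N HN].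
  exists N. intros n Hn. specialize (Hge n).
  assert (HS : 0 < INR (S (phi n))) by (apply lt_0_INR; lia).
  assert (INR N <= INR (S (phi n))) by (apply le_INR; lia).
  apply (Rmult_lt_reg_r (INR (S (phi n)))); auto.
  unfold Rdiv. rewrite Rmult_assoc, Rinv_l by lra. nra.
Qed.

Section Sequences.
Context {V : RealInnerProductSpace}.

Lemma converges_cauchy (u : nat -> V) (l : V) : seq_converges u l -> seq_cauchy u.
Proof.
  intros Hu e He. destruct (Hu (e / 2)) as [N HN]; [lra|].
  exists N. intros n m Hn Hm.
  assert (Tri := vnorm_sub_triangle (u n) l (u m)).
  rewrite (vnorm_sub_sym l) in Tri.
  assert (Hn' := HN n Hn). assert (Hm' := HN m Hm). lra.
Qed.

Lemma le_of_lipschitz_limit (f : V -> R) (L b : R) (r : nat -> R) (v : nat -> V) (x : V) :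
  0 <= L -> seq_converges v x ->
  (forall n, f x - f (v n) <= L * vnorm (vsub (v n) x)) ->
  (forall n, f (v n) <= b + r n) -> limsup_le0 r -> f x <= b.
Proof.
  intros HL Hv Hf Hb Hr. apply Rle_plus_epsilon. intros d Hd.
  destruct (Hv (d / (2 * (L + 1)))) as [N1 HN1]; [apply Rdiv_lt_0_compat; lra|].
  destruct (Hr (d / 2)) as [N2 HN2]; [lra|].
  set (n := Nat.max N1 N2).
  assert (Hn1 := HN1 n ltac:(lia)). assert (Hn2 := HN2 n ltac:(lia)).
  assert (L * vnorm (vsub (v n) x) <= (L + 1) * (d / (2 * (L + 1))))
    by (apply Rmult_le_compat; generalize (vnorm_ge0 (vsub (v n) x)); lra).
  replace ((L + 1) * (d / (2 * (L + 1)))) with (d / 2) in H by (field; lra).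
  specialize (Hf n). specialize (Hb n). lra.
Qed.

Section MaximizingSequences.
Variable T : V -> V.
Hypothesis HT : is_bounded_op T.

Lemma near_maximizers_close (u v : V) : vnorm u <= 1 -> vnorm v <= 1 ->
  opnorm T ^ 2 * vnorm (vsub u v) ^ 2
  <= 2 * (opnorm T ^ 2 - vnorm (T u) ^ 2) + 2 * (opnorm T ^ 2 - vnorm (T v) ^ 2)
     + vnorm (vsub (T u) (T v)) ^ 2.
Proof.
  intros Hu Hv.
  assert (P := parallelogram u v). assert (PT := parallelogram (T u) (T v)).
  assert (Hsum := sqnorm_op_le T (vadd u v) HT). rewrite (proj1 (proj1 HT)) in Hsum.
  assert (Hu2 : vnorm u ^ 2 <= 1) by (generalize (vnorm_ge0 u); nra).
  assert (Hv2 : vnorm v ^ 2 <= 1) by (generalize (vnorm_ge0 v); nra).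
  assert (K2 : 0 <= opnorm T ^ 2) by nra.
  nra.
Qed.

Lemma maximizing_seq_cauchy (v : nat -> V) :
  0 < opnorm T -> (forall n, vnorm (v n) <= 1) -> seq_cauchy (fun n => T (v n)) ->
  limsup_le0 (fun n => opnorm T - vnorm (T (v n))) -> seq_cauchy v.
Proof.
  intros HK Hv HTv Hmax e He. set (K := opnorm T) in *.
  destruct (HTv (e * K / 2)) as [N1 HN1]; [nra|].
  assert (He2 : 0 < e ^ 2 * K / 16) by (assert (0 < e ^ 2) by (apply pow_lt; lra); nra).
  destruct (Hmax _ He2) as [N2 HN2].
  exists (Nat.max N1 N2). intros n m Hn Hm.
  assert (Close := near_maximizers_close (v n) (v m) (Hv n) (Hv m)). fold K in Close.
  assert (Dn := HN1 n m ltac:(lia) ltac:(lia)).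
  assert (Rn := HN2 n ltac:(lia)). assert (Rm := HN2 m ltac:(lia)).
  assert (Bn := opnorm_ub T (v n) HT (Hv n)). assert (Bm := opnorm_ub T (v m) HT (Hv m)).
  fold K in Bn, Bm.
  assert (Sn : K ^ 2 - vnorm (T (v n)) ^ 2 <= 2 * K * (e ^ 2 * K / 16))
    by (generalize (vnorm_ge0 (T (v n))); nra).
  assert (Sm : K ^ 2 - vnorm (T (v m)) ^ 2 <= 2 * K * (e ^ 2 * K / 16))
    by (generalize (vnorm_ge0 (T (v m))); nra).
  assert (SD : vnorm (vsub (T (v n)) (T (v m))) ^ 2 <= (e * K / 2) ^ 2)
    by (generalize (vnorm_ge0 (vsub (T (v n)) (T (v m)))); nra).
  apply Rlt_of_sqr_lt; [lra|]. apply (Rmult_lt_reg_l (K ^ 2)); [nra|].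
  assert (0 < e ^ 2 * K ^ 2) by (apply Rmult_lt_0_compat; apply pow_lt; lra).
  nra.
Qed.

Lemma compact_op_maximizing_subseq (u : nat -> V) (c : R) :
  is_complete V -> is_compact_op T -> 0 < opnorm T -> (forall n, vnorm (u n) <= 1) ->
  (forall n, opnorm T - vnorm (T (u n)) <= c / INR (S n)) ->
  exists (phi : nat -> nat) (x : V), (forall n, (phi n < phi (S n))%nat) /\
    seq_converges (fun n => u (phi n)) x /\ norm_attaining_set T x.
Proof.
  intros Hcomplete [_ Hcomp] HK Hu Hmax.
  destruct (Hcomp u) as [phi [l [Hphi Hconv]]]; [exists 1; auto|].
  set (v := fun n => u (phi n)).
  assert (Hmax_v : limsup_le0 (fun n => c / INR (S (phi n))))
    by (apply limsup_le0_inv_subseq, Hphi).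
  assert (Hcauchy : seq_cauchy v).
  { refine (maximizing_seq_cauchy v HK (fun n => Hu (phi n)) _ _).
    - apply (converges_cauchy _ _ Hconv).
    - apply (limsup_le0_le _ _ (fun n => Hmax (phi n)) Hmax_v). }
  destruct (Hcomplete v Hcauchy) as [x Hx].
  exists phi, x. do 2 (split; auto).
  assert (Hx1 : vnorm x <= 1).
  { apply (le_of_lipschitz_limit vnorm 1 1 (fun _ => 0) v x); auto; try lra.
    - intro n. rewrite Rmult_1_l, vnorm_sub_sym. apply vnorm_sub_ge.
    - intro n. rewrite Rplus_0_r. apply Hu.
    - intros d Hd. exists 0%nat. auto. }
  assert (HTx : - vnorm (T x) <= - opnorm T).
  { apply (le_of_lipschitz_limit (fun z => - vnorm (T z)) (opnorm T) _
             (fun n => c / INR (S (phi n))) v x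
             (Rlt_le _ _ HK) Hx); [|intro n; specialize (Hmax (phi n)); unfold v; lra|exact Hmax_v].
    intro n.
    assert (H := vnorm_sub_ge (T (v n)) (T x)). rewrite <- (lin_sub T _ _ (proj1 HT)) in H.
    assert (B := vnorm_op_le T (vsub (v n) x) HT). lra. }
  assert (B := vnorm_op_le T x HT).
  split; nra.
Qed.

End MaximizingSequences.
End Sequences.

Section NearMaximizers.
Context {V : RealInnerProductSpace}.
Variables (T A : V -> V) (eps : R).
Hypotheses (HT : is_bounded_op T) (HA : is_bounded_op A) (Heps : 0 <= eps)
  (HBJ : BJ_eps_orth_op eps T A).

Lemma sqnorm_near_maximizer_ge (l : R) (x : V) : vnorm x <= 1 ->
  opnorm (op_add_scal T A l) - l ^ 2 < vnorm (op_add_scal T A l x) ->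
  opnorm T ^ 2 - 2 * eps * opnorm T * (Rabs l * opnorm A)
    - 2 * l ^ 2 * (opnorm T + Rabs l * opnorm A)
  <= vnorm (op_add_scal T A l x) ^ 2.
Proof.
  intros Hx Hnear.
  assert (HS := bounded_op_add_scal T A l HT HA).
  assert (K0 := opnorm_ge0 T HT). assert (a0 := opnorm_ge0 A HA).
  assert (o0 := opnorm_ge0 _ HS).
  assert (Hup : opnorm (op_add_scal T A l) <= opnorm T + Rabs l * opnorm A).
  { apply opnorm_least; auto. intros z Hz. unfold op_add_scal.
    eapply Rle_trans; [apply vnorm_triangle|]. rewrite vnorm_scal.
    assert (vnorm (T z) <= opnorm T) by (apply opnorm_ub; auto).
    assert (vnorm (A z) <= opnorm A) by (apply opnorm_ub; auto).
    generalize (Rabs_pos l). nra. }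
  assert (Hb := HBJ l). assert (Hq := opnorm_scal_le A l HA).
  assert (Hq' : eps * opnorm T * opnorm (fun x => vscal l (A x))
                <= eps * opnorm T * (Rabs l * opnorm A))
    by (apply Rmult_le_compat_l; [apply Rmult_le_pos|]; auto).
  set (o := opnorm (op_add_scal T A l)) in *.
  set (y := vnorm (op_add_scal T A l x)) in *.
  assert (y0 : 0 <= y) by apply vnorm_ge0.
  assert (Hy : o ^ 2 - 2 * l ^ 2 * o <= y ^ 2) by (destruct (Rle_lt_dec (l ^ 2) o); nra).
  assert (2 * l ^ 2 * o <= 2 * l ^ 2 * (opnorm T + Rabs l * opnorm A)) by nra.
  lra.
Qed.

Variables (s t : R) (x : V).
Hypotheses (Hs : s = 1 \/ s = -1) (Ht : 0 < t <= 1) (Hx : vnorm x <= 1)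
  (Hnear : opnorm (op_add_scal T A (- s * t)) - t ^ 2
           < vnorm (op_add_scal T A (- s * t) x)).

Lemma near_maximizer_expansion :
  opnorm T ^ 2 - 2 * eps * opnorm T * (t * opnorm A) - 2 * t ^ 2 * (opnorm T + t * opnorm A)
  <= vnorm (T x) ^ 2 - 2 * t * (s * inner (T x) (A x)) + t ^ 2 * vnorm (A x) ^ 2.
Proof.
  assert (Hl : Rabs (- s * t) = t)
    by (destruct Hs; subst; unfold Rabs; destruct Rcase_abs; lra).
  assert (Hsq : (- s * t) ^ 2 = t ^ 2) by (destruct Hs as [-> | ->]; ring).
  rewrite <- Hsq in Hnear.
  assert (H := sqnorm_near_maximizer_ge (- s * t) x Hx Hnear).
  rewrite sqnorm_op_add_scal, Hl, Hsq in H.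
  lra.
Qed.

Lemma near_maximizer_signed_inner_le :
  s * inner (T x) (A x)
  <= eps * opnorm T * opnorm A + (opnorm T + opnorm A + opnorm A ^ 2 / 2) * t.
Proof.
  assert (E := near_maximizer_expansion).
  assert (BT := opnorm_ub T x HT Hx). assert (BA := opnorm_ub A x HA Hx).
  assert (K0 := opnorm_ge0 T HT). assert (a0 := opnorm_ge0 A HA).
  assert (vnorm (T x) ^ 2 <= opnorm T ^ 2) by (generalize (vnorm_ge0 (T x)); nra).
  assert (t ^ 2 * vnorm (A x) ^ 2 <= t ^ 2 * opnorm A ^ 2)
    by (apply Rmult_le_compat_l; [nra|generalize (vnorm_ge0 (A x)); nra]).
  assert (t ^ 2 * (t * opnorm A) <= t ^ 2 * opnorm A)
    by (apply Rmult_le_compat_l; nra).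
  apply (Rmult_le_reg_l (2 * t)); [lra|].
  replace (2 * t * (eps * opnorm T * opnorm A + (opnorm T + opnorm A + opnorm A ^ 2 / 2) * t))
    with (2 * eps * opnorm T * (t * opnorm A) + 2 * t ^ 2 * (opnorm T + opnorm A)
          + t ^ 2 * opnorm A ^ 2) by field.
  lra.
Qed.

Lemma near_maximizer_opnorm_gap : 0 < opnorm T ->
  opnorm T - vnorm (T x)
  <= (2 * (1 + eps) * opnorm T * opnorm A + 2 * (opnorm T + opnorm A) + opnorm A ^ 2)
     / opnorm T * t.
Proof.
  intro HK.
  assert (E := near_maximizer_expansion).
  assert (BT := opnorm_ub T x HT Hx). assert (BA := opnorm_ub A x HA Hx).
  assert (a0 := opnorm_ge0 A HA). assert (B0 := vnorm_ge0 (T x)).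
  assert (q0 := vnorm_ge0 (A x)).
  assert (Cp := Rabs_le_between _ _ (cauchy_schwarz (T x) (A x))).
  set (K := opnorm T) in *. set (a := opnorm A) in *.
  set (B := vnorm (T x)) in *. set (q := vnorm (A x)) in *. set (p := inner (T x) (A x)) in *.
  assert (Hp : - (K * a) <= s * p <= K * a)
    by (assert (B * q <= K * a) by (apply Rmult_le_compat; auto);
        destruct Hs; subst; lra).
  assert (Hgap : K ^ 2 - B ^ 2
                 <= (2 * (1 + eps) * K * a + 2 * (K + a) + a ^ 2) * t).
  { assert (t ^ 2 <= t) by nra.
    assert (t ^ 2 * q ^ 2 <= t * a ^ 2)
      by (assert (q ^ 2 <= a ^ 2) by nra; nra).
    assert (t ^ 2 * (K + t * a) <= t * (K + a)).
    { assert (t * K + t ^ 2 * a <= K + a) by nra.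
      replace (t ^ 2 * (K + t * a)) with (t * (t * K + t ^ 2 * a)) by ring.
      apply Rmult_le_compat_l; lra. }
    assert (- (2 * t * (s * p)) <= 2 * t * (K * a)) by nra.
    nra. }
  apply (Rmult_le_reg_l K); auto.
  replace (K * ((2 * (1 + eps) * K * a + 2 * (K + a) + a ^ 2) / K * t))
    with ((2 * (1 + eps) * K * a + 2 * (K + a) + a ^ 2) * t) by (field; lra).
  nra.
Qed.

End NearMaximizers.

Lemma BJ_eps_orth_op_signed_witness {V : RealInnerProductSpace} (eps s : R) (T A : V -> V) :
  is_complete V -> is_compact_op T -> is_bounded_op A -> 0 <= eps -> 0 < opnorm T ->
  (s = 1 \/ s = -1) -> BJ_eps_orth_op eps T A ->
  exists x, norm_attaining_set T x /\
    s * inner (T x) (A x) <= eps * opnorm T * opnorm A.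
Proof.
  intros Hcomplete HTc HA Heps HK Hs HBJ.
  assert (HT := proj1 HTc).
  set (t := fun n : nat => / INR (S n)).
  assert (Ht : forall n, 0 < t n <= 1).
  { intro n. assert (1 <= INR (S n)) by (rewrite S_INR; generalize (pos_INR n); lra).
    split; [apply Rinv_0_lt_compat; lra|]. rewrite <- Rinv_1. apply Rinv_le_contravar; lra. }
  assert (Happrox : forall n, exists x, vnorm x <= 1 /\
            opnorm (op_add_scal T A (- s * t n)) - t n ^ 2
            < vnorm (op_add_scal T A (- s * t n) x)).
  { intro n. apply opnorm_approx; [apply bounded_op_add_scal; auto|].
    apply pow_lt, Ht. }
  set (u := fun n => proj1_sig (constructive_indefinite_description _ (Happrox n))).
  assert (Hu : forall n, vnorm (u n) <= 1 /\
            opnorm (op_add_scal T A (- s * t n)) - t n ^ 2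
            < vnorm (op_add_scal T A (- s * t n) (u n)))
    by (intro n; exact (proj2_sig (constructive_indefinite_description _ (Happrox n)))).
  destruct (compact_op_maximizing_subseq T HT u _ Hcomplete HTc HK (fun n => proj1 (Hu n))
    (fun n => near_maximizer_opnorm_gap T A eps HT HA Heps HBJ s (t n) (u n)
                Hs (Ht n) (proj1 (Hu n)) (proj2 (Hu n)) HK))
    as [phi [x [Hphi [Hconv Hx]]]].
  exists x. split; auto.
  assert (K0 := opnorm_ge0 T HT). assert (a0 := opnorm_ge0 A HA).
  apply (le_of_lipschitz_limit (fun z => s * inner (T z) (A z)) (2 * opnorm T * opnorm A) _
           (fun n => (opnorm T + opnorm A + opnorm A ^ 2 / 2) / INR (S (phi n)))
           (fun n => u (phi n)) x); [nra|exact Hconv| | |apply limsup_le0_inv_subseq, Hphi].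
  - intro n. rewrite vnorm_sub_sym.
    assert (H := inner_op_lipschitz T A x (u (phi n)) HT HA
                   (Req_le _ _ (proj1 Hx)) (proj1 (Hu (phi n)))).
    apply Rabs_le_between in H. destruct Hs as [-> | ->]; lra.
  - intro n.
    exact (near_maximizer_signed_inner_le T A eps HT HA Heps HBJ s (t (phi n)) (u (phi n))
             Hs (Ht (phi n)) (proj1 (Hu (phi n))) (proj2 (Hu (phi n)))).
Qed.

Section Segment.
Context {V : RealInnerProductSpace}.
Variables T A : V -> V.
Hypotheses (HT : is_bounded_op T) (HA : is_bounded_op A).

(* [|T|^2 |z|^2 - |T z|^2] is a nonnegative quadratic form, so its zero set is a subspace. *)
Lemma vnorm_op_eq_comb (x y : V) (a b : R) :
  vnorm (T x) = opnorm T * vnorm x -> vnorm (T y) = opnorm T * vnorm y ->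
  vnorm (T (vadd (vscal a x) (vscal b y))) = opnorm T * vnorm (vadd (vscal a x) (vscal b y)).
Proof.
  intros Hx Hy. set (K := opnorm T) in *.
  assert (Hx2 : inner (T x) (T x) = K ^ 2 * inner x x)
    by (rewrite <- (vnorm_sq (T x)), <- (vnorm_sq x), Hx; ring).
  assert (Hy2 : inner (T y) (T y) = K ^ 2 * inner y y)
    by (rewrite <- (vnorm_sq (T y)), <- (vnorm_sq y), Hy; ring).
  assert (Q : forall c d, vnorm (T (vadd (vscal c x) (vscal d y))) ^ 2
                          - K ^ 2 * vnorm (vadd (vscal c x) (vscal d y)) ^ 2
              = 2 * c * d * (inner (T x) (T y) - K ^ 2 * inner x y)).
  { intros c d. rewrite (lin_comb T _ _ _ _ (proj1 HT)), !vnorm_sq. inner_expand.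
    rewrite Hx2, Hy2, (inner_sym V (T y) (T x)), (inner_sym V y x). ring. }
  assert (Q1 := Q 1 1). assert (Q2 := Q 1 (-1)).
  assert (S1 := sqnorm_op_le T (vadd (vscal 1 x) (vscal 1 y)) HT).
  assert (S2 := sqnorm_op_le T (vadd (vscal 1 x) (vscal (-1) y)) HT).
  fold K in S1, S2.
  assert (Hbeta : inner (T x) (T y) - K ^ 2 * inner x y = 0) by lra.
  assert (Qab := Q a b). rewrite Hbeta, Rmult_0_r in Qab.
  assert (Hsq : vnorm (T (vadd (vscal a x) (vscal b y))) ^ 2
                = (K * vnorm (vadd (vscal a x) (vscal b y))) ^ 2)
    by (rewrite Rpow_mult_distr; lra).
  assert (K0 : 0 <= K) by (apply opnorm_ge0, HT).
  assert (0 <= K * vnorm (vadd (vscal a x) (vscal b y)))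
    by (apply Rmult_le_pos; [lra|apply vnorm_ge0]).
  assert (0 <= vnorm (T (vadd (vscal a x) (vscal b y)))) by apply vnorm_ge0.
  apply Rle_antisym; apply Rle_of_sqr_le; auto; lra.
Qed.

Lemma segment_neq0 (x y : V) (s : R) : vnorm x = 1 -> vnorm y = 1 ->
  inner (T x) (A x) <> inner (T y) (A y) -> vadd (vscal (1 - s) x) (vscal s y) <> vzero.
Proof.
  intros Hx Hy Hneq Hz.
  assert (Ez : forall w, inner (vadd (vscal (1 - s) x) (vscal s y)) w = 0)
    by (intro w; rewrite Hz; apply inner_zero_l).
  assert (ETz : forall w, inner w (vadd (vscal (1 - s) (T x)) (vscal s (T y))) = 0)
    by (intro w; rewrite <- (lin_comb T _ _ _ _ (proj1 HT)), Hz, (lin_zero T (proj1 HT));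
        apply inner_zero_r).
  assert (EAz : forall w, inner (vadd (vscal (1 - s) (A x)) (vscal s (A y))) w = 0)
    by (intro w; rewrite <- (lin_comb A _ _ _ _ (proj1 HA)), Hz, (lin_zero A (proj1 HA));
        apply inner_zero_l).
  assert (E1 := Ez x). assert (E2 := Ez y).
  assert (E3 := ETz (A x)). assert (E4 := ETz (A y)). assert (E5 := EAz (T x)).
  revert E1 E2 E3 E4 E5. inner_expand.
  rewrite <- (vnorm_sq x), <- (vnorm_sq y), Hx, Hy, (inner_sym V y x).
  rewrite !(inner_sym V (A x)), !(inner_sym V (A y)).
  intros E1 E2 E3 E4 E5.
  (* [<z, x> = <z, y> = 0] force [s = 1/2], and then the three remaining equations
     give [<T x, A x> = <T y, A y>]. *)
  assert (Hs : (1 - 2 * s) * (1 - inner x y) = 0) by lra.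
  apply Rmult_integral in Hs. destruct Hs as [Hs|Hs].
  - assert (s = 1 / 2) by lra. subst s. lra.
  - assert (inner x y = 1) by lra. nra.
Qed.

Lemma eps_orth_on_segment (eps : R) (x y : V) :
  0 <= eps -> (forall w, norm_attaining_set T w -> norm_attaining_set A w) ->
  norm_attaining_set T x -> norm_attaining_set T y ->
  inner (T x) (A x) < - (eps * opnorm T * opnorm A) ->
  eps * opnorm T * opnorm A < inner (T y) (A y) ->
  exists w, norm_attaining_set T w /\ ip_eps_orth eps (T w) (A w).
Proof.
  intros Heps HM [Hx HTx] [Hy HTy] Hpx Hpy.
  assert (c0 : 0 <= eps * opnorm T * opnorm A)
    by (apply Rmult_le_pos; [apply Rmult_le_pos|apply opnorm_ge0]; auto; apply opnorm_ge0, HT).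
  set (c := eps * opnorm T * opnorm A) in *.
  set (z := fun s => vadd (vscal (1 - s) x) (vscal s y)).
  set (g := fun s => inner (T (z s)) (A (z s)) + c * inner (z s) (z s)).
  set (p := fun s =>
    (1 - s) ^ 2 * inner (T x) (A x) + (1 - s) * s * (inner (T x) (A y) + inner (T y) (A x))
    + s ^ 2 * inner (T y) (A y) + c * ((1 - s) ^ 2 + 2 * (1 - s) * s * inner x y + s ^ 2)).
  assert (Hg : forall s, g s = p s).
  { intro s. unfold g, z, p.
    rewrite (lin_comb T _ _ _ _ (proj1 HT)), (lin_comb A _ _ _ _ (proj1 HA)). inner_expand.
    rewrite <- (vnorm_sq x), <- (vnorm_sq y), Hx, Hy, (inner_sym V y x). ring. }
  assert (Hgc : continuity g).
  { intro s. apply (continuity_pt_locally_ext p g 1 s); [lra|intros; symmetry; apply Hg|].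
    unfold p. reg. }
  destruct (IVT g 0 1 Hgc ltac:(lra)) as [s [Hs Hgs]];
    [rewrite Hg; unfold p; lra|rewrite Hg; unfold p; lra|].
  assert (Hz : z s <> vzero) by (apply segment_neq0; auto; lra).
  set (w := vscal (/ vnorm (z s)) (z s)).
  assert (Hnz := vnorm_gt0 _ Hz).
  assert (HTz : vnorm (T (z s)) = opnorm T * vnorm (z s))
    by (apply vnorm_op_eq_comb; [rewrite Hx, HTx|rewrite Hy, HTy]; ring).
  assert (Mw : norm_attaining_set T w).
  { split; [apply vnorm_normalize, Hz|].
    unfold w. rewrite (proj2 (proj1 HT)), vnorm_scal, HTz, Rabs_right
      by (left; apply Rinv_0_lt_compat, Hnz).
    field. lra. }
  exists w. split; auto.
  unfold ip_eps_orth. rewrite (proj2 Mw), (proj2 (HM w Mw)). fold c.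
  assert (Hinner : inner (T w) (A w) = - c).
  { unfold w. rewrite (proj2 (proj1 HT)), (proj2 (proj1 HA)). inner_expand.
    unfold g in Hgs. rewrite <- vnorm_sq in Hgs.
    replace (inner (T (z s)) (A (z s))) with (- c * vnorm (z s) ^ 2) by lra.
    field. lra. }
  rewrite Hinner, Rabs_Ropp, Rabs_right; lra.
Qed.

Lemma eps_orth_between (eps : R) (x y : V) :
  0 <= eps -> (forall w, norm_attaining_set T w -> norm_attaining_set A w) ->
  norm_attaining_set T x -> norm_attaining_set T y ->
  inner (T x) (A x) <= eps * opnorm T * opnorm A ->
  - (eps * opnorm T * opnorm A) <= inner (T y) (A y) ->
  exists w, norm_attaining_set T w /\ ip_eps_orth eps (T w) (A w).
Proof.
  intros Heps HM Mx My Hpx Hpy.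
  destruct (Rlt_le_dec (inner (T x) (A x)) (- (eps * opnorm T * opnorm A))) as [Lx|Lx].
  - destruct (Rlt_le_dec (eps * opnorm T * opnorm A) (inner (T y) (A y))) as [Ly|Ly].
    + apply (eps_orth_on_segment eps x y); auto.
    + exists y. split; auto. unfold ip_eps_orth.
      rewrite (proj2 My), (proj2 (HM y My)). apply Rabs_le. lra.
  - exists x. split; auto. unfold ip_eps_orth.
    rewrite (proj2 Mx), (proj2 (HM x Mx)). apply Rabs_le. lra.
Qed.

End Segment.

Lemma BJ_eps_orth_op_of_ip_eps_orth {V : RealInnerProductSpace} (eps : R) (T A : V -> V) (x : V) :
  0 <= eps -> is_bounded_op T -> is_bounded_op A -> norm_attaining_set T x ->
  vnorm (A x) = opnorm A -> ip_eps_orth eps (T x) (A x) -> BJ_eps_orth_op eps T A.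
Proof.
  intros Heps HT HA [Hx HTx] HAx Horth l.
  unfold ip_eps_orth in Horth. rewrite HTx, HAx in Horth.
  apply Rabs_le_between in Horth.
  assert (HS := opnorm_ub _ x (bounded_op_add_scal T A l HT HA) (Req_le _ _ Hx)).
  assert (Hsc := opnorm_scal_ge A l x HA (Req_le _ _ Hx)). rewrite HAx in Hsc.
  assert (E := sqnorm_op_add_scal T A l x). rewrite HTx, HAx in E.
  assert (K0 := opnorm_ge0 T HT). assert (a0 := opnorm_ge0 A HA).
  assert (Hn := vnorm_ge0 (op_add_scal T A l x)).
  set (K := opnorm T) in *. set (a := opnorm A) in *.
  set (p := inner (T x) (A x)) in *.
  set (q := opnorm (fun x0 : V => vscal l (A x0))) in *.
  assert (- (Rabs l * (eps * K * a)) <= l * p) by (unfold Rabs; destruct (Rcase_abs l); nra).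
  assert (eps * K * (Rabs l * a) <= eps * K * q) by (apply Rmult_le_compat_l; nra).
  apply Rle_ge. nra.
Qed.

Lemma exists_norm_attaining_of_opnorm0 {V : RealInnerProductSpace} (eps : R) (T A : V -> V) :
  (exists x : V, x <> vzero) -> 0 <= eps -> is_bounded_op T -> opnorm T = 0 ->
  exists x, norm_attaining_set T x /\ ip_eps_orth eps (T x) (A x).
Proof.
  intros [z Hz] Heps HT HK.
  set (w := vscal (/ vnorm z) z).
  assert (Hw : vnorm w = 1) by (apply vnorm_normalize, Hz).
  assert (HTw : vnorm (T w) = 0)
    by (assert (B := vnorm_op_le T w HT); rewrite HK in B; generalize (vnorm_ge0 (T w)); nra).
  exists w. split; [split; lra|].
  unfold ip_eps_orth. rewrite (vnorm_eq0 _ HTw), inner_zero_l, Rabs_R0, vnorm_zero.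
  apply Req_le. ring.
Qed.

Theorem mainTheorem5 (H : RealInnerProductSpace) (Hcomplete : is_complete H)
  (Hnontriv : exists x : H, x <> vzero)
  (eps : R) (Heps : 0 <= eps < 1)
  (T A : H -> H) (HT : is_compact_op T) (HA : is_bounded_op A)
  (HM : forall x : H, norm_attaining_set T x -> norm_attaining_set A x) :
  BJ_eps_orth_op eps T A <->
  exists x : H, norm_attaining_set T x /\ ip_eps_orth eps (T x) (A x).
Proof.
  assert (HTb := proj1 HT). split.
  - intro HBJ. destruct (opnorm_ge0 T HTb) as [HK|HK].
    + destruct (BJ_eps_orth_op_signed_witness eps 1 T A Hcomplete HT HA (proj1 Heps) HK
                  (or_introl eq_refl) HBJ) as [x [Mx Hx]].
      destruct (BJ_eps_orth_op_signed_witness eps (-1) T A Hcomplete HT HA (proj1 Heps) HK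
                  (or_intror eq_refl) HBJ) as [y [My Hy]].
      apply (eps_orth_between T A HTb HA eps x y (proj1 Heps) HM Mx My); lra.
    + apply exists_norm_attaining_of_opnorm0; auto. lra.
  - intros [x [Mx Horth]].
    exact (BJ_eps_orth_op_of_ip_eps_orth eps T A x (proj1 Heps) HTb HA Mx
             (proj2 (HM x Mx)) Horth).
Qed.
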